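(* Let $n\ge3$, let $g$ be the constant contravariant metric on $\mathbb R^n$ with $g^{ij}=\delta^{i,n+1-j}$, and for $k=1,\dots,n-2$ let $X_{(k)}=\sum_{i=1}^{n-k}(n-k+1-2i)\,u^{i+k}\partial_{u^i}$. Then for all $k$ and all $\alpha\ge0$: (1) $\mathcal L_{X_{(k)}}g=0$; (2) $\mathcal L_{X_{(k)}}\mu^{(n;\alpha)}=p_{[n,k,\alpha]}\,\mu^{(n;\alpha+k)}$; (3) for every $m\ge1$, $\mathcal L^m_{X_{(k)}}\mu^{(n;\alpha)}=\Big(\prod_{s=0}^{m-1}(p_{[n,k,\alpha]}-2ks)\Big)\mu^{(n;\alpha+mk)}$, where $p_{[n,k,\alpha]}=3k+1-n-2\alpha$.
   Context: $\mathcal L$ denotes the Lie derivative (acting on symmetric bivectors). For integers $n\ge1$, $k\ge0$ the symmetric bivector $\mu^{(n;k)}$ has components $\mu^{(n;k)ij}=[3(i+j)-2(n+2-k)]\,u^{i+j-1+k}$, $i,j=1,\dots,n$, with the convention $u^\beta\equiv0$ for $\beta>n$ (so $\mu^{(n;k)}=0$ for $k>n-2$). *)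

From HB Require Import structures.
From mathcomp Require Import all_boot all_order all_algebra.
From mathcomp Require Import reals.
From mathcomp Require Import mpoly.
Set Implicit Arguments. Unset Strict Implicit. Unset Printing Implicit Defensive.
Import Order.TTheory GRing.Theory Num.Theory.
Local Open Scope ring_scope.

Section Defs.
Variables (R : realType) (n : nat).

(* Fields on R^n with polynomial components in the coordinates u^1..u^n;
   index i : 'I_n stands for the 1-based index i+1. *)
Definition field := {mpoly R[n]}.
Definition vfield := 'I_n -> field.
Definition bivector := 'M[field]_n.

(* coordinate u^beta (1-based), with u^beta = 0 outside 1..n *)
Definition ucoord (beta : nat) : field :=
  if (0 < beta)%N then
    (if insub beta.-1 is Some i then 'X_(i : 'I_n) else 0)
  else 0.

Definition lie (X : vfield) (P : bivector) : bivector :=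
  \matrix_(i, j) \sum_(l < n)
     (X l * mderiv l (P i j) - P l j * mderiv l (X i) - P i l * mderiv l (X j)).

Definition gmetric : bivector :=
  \matrix_(i, j) (if (i.+1 + j.+1 == n.+1)%N then 1 else 0).

Definition mu (k : nat) : bivector :=
  \matrix_(i, j)
    ((3 * (i.+1 + j.+1)%:Z - 2 * ((n + 2)%:Z - k%:Z))%:~R
       * ucoord (i.+1 + j.+1 - 1 + k)).

Definition Xk (k : nat) : vfield := fun i =>
  if (i.+1 <= n - k)%N
  then ((n%:Z - k%:Z + 1 - 2 * (i.+1)%:Z)%:~R * ucoord (i.+1 + k))
  else 0.

End Defs.
Arguments Xk : clear implicits.

Definition pnka (n k alpha : nat) : int :=
  3 * k%:Z + 1 - n%:Z - 2 * alpha%:Z.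

From HB Require Import structures.
From mathcomp Require Import all_boot all_order all_algebra.
From mathcomp Require Import reals.
From mathcomp Require Import mpoly.
From mathcomp Require Import ring zify.
Import Order.TTheory GRing.Theory Num.Theory.
Local Open Scope ring_scope.
Set Implicit Arguments. Unset Strict Implicit.

(* With 0-based indices i, j (coordinates u still numbered from 1), X_(k) is
   the shift field X^i = c_i u^{i+1+k}.  Its Lie derivative of a bivector with
   entries P^{ij} = p_{ij} u^{i+j+1+a} is again of this form with a replaced by
   a + k: the transport term P^{lj} d_l X^i only picks up l = i + k.  For mu
   the new coefficient is p_[n,k,a] times that of mu^{(n;a+k)}; for g the two
   transport terms cancel because c_i + c_j = 0 on the antidiagonal
   i + j + k + 1 = n.  Iterating, the factor at step s is
   p_[n,k,a+sk] = p_[n,k,a] - 2ks. *)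

Section IterShift.
Variables (V : zmodType) (L : V -> V) (f : nat -> V) (c : nat -> int) (k : nat).
Hypothesis L_mulrz : forall v z, L (v *~ z) = L v *~ z.
Hypothesis L_shift : forall a, L (f a) = f (a + k) *~ c a.

Lemma iter_shift a m :
  iter m L (f a) = f (a + m * k) *~ \prod_(s < m) c (a + s * k).
Proof.
elim: m => [|m IHm]; first by rewrite big_ord0 mul0n addn0.
by rewrite iterS IHm L_mulrz L_shift big_ord_recr /= mulrzA mulrzAC -addnA -mulSnr.
Qed.

End IterShift.

Section Coordinates.
Variables (R : realType) (n : nat).
Local Notation F := (field R n).
Local Notation u := (ucoord R n).

Lemma ucoord_eq0 b : (n < b)%N -> u b = 0.
Proof.
rewrite /ucoord; case: b => [|b] //= ltnb.
by case: insubP => [i _ /= vi|//]; move: (ltn_ord i); rewrite vi; lia.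
Qed.

Lemma mderiv_ucoord (l : 'I_n) b : mderiv l (u b) = (b == l.+1)%:R.
Proof.
rewrite /ucoord; case: b => [|b] /=; first by rewrite mderiv0.
case: insubP => [i _ /= vi|]; last first.
  rewrite mderiv0 -ltnNge => ltnb; case: eqP => // -[eqbl].
  by move: ltnb; rewrite eqbl ltnNge ltn_ord.
rewrite mderivX mnm1E eqSS -vi (inj_eq val_inj).
case: eqP => [->|_]; last by rewrite scale0r.
by rewrite -{1}(add0m U_(l)%MM) addmK mpolyX0 scale1r.
Qed.

Lemma sum_mul_mderiv_ucoord (G : nat -> F) b :
  \sum_(l < n) G l * mderiv l (u b) = if (0 < b <= n)%N then G b.-1 else 0.
Proof.
under eq_bigr do rewrite mderiv_ucoord.
case: ifP => [lt0bn|nb].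
  have ltbn : (b.-1 < n)%N by lia.
  rewrite (bigD1 (Ordinal ltbn)) //= prednK ?eqxx ?mulr1 -?lt0n; last by lia.
  rewrite big1 ?addr0 // => l neql; case: eqP => [eqbl|]; last by rewrite mulr0.
  by case/eqP: neql; apply/val_inj; rewrite /= eqbl.
rewrite big1 // => l _; case: eqP => [eqbl|]; last by rewrite mulr0.
by move: nb; rewrite eqbl ltn_ord.
Qed.

Lemma if_mul_ucoord (b : bool) (a : F) T :
  ((T <= n)%N -> b) -> (if b then a * u T else 0) = a * u T.
Proof.
case: b => // leTn_false; case: (leqP T n) => [/leTn_false //|ltnT].
by rewrite ucoord_eq0 ?mulr0.
Qed.

Lemma mderiv_mulz (l : 'I_n) (z : int) (p : F) :
  mderiv l (z%:~R * p) = z%:~R * mderiv l p.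
Proof. by rewrite !mulrzl raddfMz. Qed.

Lemma lie_scalez (X : vfield R n) (z : int) (P : bivector R n) :
  lie X ((z%:~R : F) *: P) = (z%:~R : F) *: lie X P.
Proof.
apply/matrixP => i j; rewrite !mxE mulr_sumr; apply: eq_bigr => l _.
by rewrite !mxE !mderiv_mulz; ring.
Qed.

End Coordinates.

Section ShiftField.
Variables (R : realType) (n : nat) (X : vfield R n) (c : nat -> int) (k : nat).
Hypothesis XE : forall i : 'I_n, X i = (c i)%:~R * ucoord R n (i.+1 + k).
Local Notation F := (field R n).
Local Notation u := (ucoord R n).

Lemma sum_mul_mderiv_shift (G : nat -> F) (i : 'I_n) :
  \sum_(l < n) G l * mderiv l (X i)
    = if (i + k < n)%N then (c i)%:~R * G (i + k)%N else 0.
Proof.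
under eq_bigr do rewrite XE mderiv_mulz mulrCA.
by rewrite -mulr_sumr sum_mul_mderiv_ucoord addSn /=; case: ifP; rewrite ?mulr0.
Qed.

Lemma lie_shiftE (P : bivector R n) (e : nat -> nat -> F) :
  (forall i j : 'I_n, P i j = e i j) ->
  forall i j : 'I_n,
  lie X P i j = \sum_(l < n) X l * mderiv l (e i j)
    - (if (i + k < n)%N then (c i)%:~R * e (i + k)%N j else 0)
    - (if (j + k < n)%N then (c j)%:~R * e i (j + k)%N else 0).
Proof.
move=> PE i j; rewrite mxE !sumrB -(sum_mul_mderiv_shift (e^~ j)).
rewrite -(sum_mul_mderiv_shift (e i)).
by congr (_ - _ - _); apply: eq_bigr => l _; rewrite PE.
Qed.

Lemma lie_shift_monomial (P : bivector R n) (p : nat -> nat -> int) (a : nat) :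
  (forall i j : 'I_n, P i j = (p i j)%:~R * u (i + j + a).+1) ->
  forall i j : 'I_n,
  lie X P i j = (p i j * c (i + j + a)%N - c i * p (i + k)%N j
                  - c j * p i (j + k)%N)%:~R * u (i + j + a + k).+1.
Proof.
move=> PE i j.
rewrite (lie_shiftE (e := fun i j => (p i j)%:~R * u (i + j + a).+1) PE).
under eq_bigr do rewrite XE mderiv_mulz mulrCA.
rewrite -mulr_sumr (sum_mul_mderiv_ucoord (fun m => (c m)%:~R * u (m.+1 + k))) /=.
rewrite (fun_if (GRing.mul _)) mulr0 addSn.
rewrite (_ : i + k + j + a = i + j + a + k)%N; last by lia.
rewrite (_ : i + (j + k) + a = i + j + a + k)%N; last by lia.
by rewrite !mulrA !if_mul_ucoord; [ring | lia ..].
Qed.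

End ShiftField.

Section XkAction.
Variables (R : realType) (n k : nat).
Local Notation F := (field R n).
Local Notation u := (ucoord R n).

Definition Xk_coef (i : nat) : int := n%:Z - k%:Z + 1 - 2 * (i.+1)%:Z.

Definition mu_coef (a i j : nat) : int := 3 * (i.+1 + j.+1)%:Z - 2 * ((n + 2)%:Z - a%:Z).

Lemma XkE (i : 'I_n) : Xk R n k i = (Xk_coef i)%:~R * u (i.+1 + k).
Proof.
rewrite /Xk; case: ifP => // /negbT; rewrite -ltnNge => ltnik.
by rewrite ucoord_eq0 ?mulr0 //; lia.
Qed.

Lemma muE a (i j : 'I_n) : mu R n a i j = (mu_coef a i j)%:~R * u (i + j + a).+1.
Proof. by rewrite mxE (_ : i.+1 + j.+1 - 1 + a = (i + j + a).+1)%N //; lia. Qed.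

Lemma mu_coef_lie a i j :
  mu_coef a i j * Xk_coef (i + j + a) - Xk_coef i * mu_coef a (i + k) j
    - Xk_coef j * mu_coef a i (j + k) = pnka n k a * mu_coef (a + k) i j.
Proof. rewrite /mu_coef /Xk_coef /pnka; ring. Qed.

Lemma lie_Xk_mu a :
  lie (Xk R n k) (mu R n a) = ((pnka n k a)%:~R : F) *: mu R n (a + k).
Proof.
apply/matrixP => i j.
by rewrite (lie_shift_monomial XkE (muE a)) mu_coef_lie mxE muE intrM -mulrA addnA.
Qed.

Lemma Xk_coef_antidiag i j : (i + j + k).+1 = n -> Xk_coef i + Xk_coef j = 0.
Proof. rewrite /Xk_coef; lia. Qed.

Lemma lie_Xk_gmetric : lie (Xk R n k) (gmetric R n) = 0.
Proof.
pose e i j : F := if (i.+1 + j.+1 == n.+1)%N then 1 else 0.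
have gE (i j : 'I_n) : gmetric R n i j = e i j by rewrite mxE.
apply/matrixP => i j; rewrite (lie_shiftE XkE gE) mxE big1 => [|l _]; last first.
  by rewrite /e; case: ifP; rewrite -?mpolyC1 ?mderivC ?mderiv0 mulr0.
rewrite /e sub0r; have [antidiag|not_antidiag] := eqVneq (i + j + k).+1 n.
  rewrite !ifT; [|lia ..].
  by rewrite !mulr1 -opprD -intrD Xk_coef_antidiag ?oppr0.
have -> : ((i + k).+1 + j.+1 == n.+1)%N = false by lia.
have -> : (i.+1 + (j + k).+1 == n.+1)%N = false by lia.
by rewrite !mulr0 !if_same subr0 oppr0.
Qed.

End XkAction.

Lemma pnka_shift n k a s : pnka n k (a + s * k) = pnka n k a - 2 * k%:Z * s%:Z.
Proof. rewrite /pnka; nia. Qed.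

Theorem lemma3 (R : realType) (n : nat) (hn : (3 <= n)%N)
  (k : nat) (hk1 : (1 <= k)%N) (hk2 : (k <= n - 2)%N) (alpha : nat) :
  [/\ lie (Xk R n k) (gmetric R n) = 0,
      lie (Xk R n k) (mu R n alpha)
        = ((pnka n k alpha)%:~R : field R n) *: mu R n (alpha + k)
    & forall m : nat, (1 <= m)%N ->
        iter m (lie (Xk R n k)) (mu R n alpha)
        = ((\prod_(s < m) (pnka n k alpha - 2 * k%:Z * s%:Z))%:~R : field R n)
            *: mu R n (alpha + m * k)].
Proof.
split; [exact: lie_Xk_gmetric | exact: lie_Xk_mu |] => m _.
have L_mulrz v z : lie (Xk R n k) (v *~ z) = lie (Xk R n k) v *~ z.
  by rewrite -!(@scaler_int (field R n)) lie_scalez.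
have L_shift a : lie (Xk R n k) (mu R n a) = mu R n (a + k) *~ pnka n k a.
  by rewrite -(@scaler_int (field R n)) lie_Xk_mu.
rewrite (iter_shift L_mulrz L_shift) -(@scaler_int (field R n)).
by congr (_%:~R *: _); apply: eq_bigr => s _; rewrite pnka_shift.
Qed.
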